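(* Let $\ell$ be a Lyndon word with $|\ell|\ge2$, let $u$ be a word or $u=\infty$, and let $\ell=r_js_js_{j-1}\cdots s_1$ be the iterated standard factorization of $\ell$ with respect to $u$. Then $$r_j<\ell<s_1\le s_2\le\dots\le s_{j-1}\le s_j.$$
   Context: Words are finite sequences over a totally ordered alphabet, compared in lexicographic order (a proper prefix is smaller than the word); $\infty$ is a formal symbol with $w<\infty$ for every word $w$. A Lyndon word is a nonempty word strictly smaller than each of its proper nonempty suffixes. A word is even/odd if its length is. For a Lyndon word $\ell$ with $|\ell|\ge2$ and $u$ a word or $\infty$, the iterated standard factorization (ISF) of $\ell$ with respect to $u$ is the unique factorization $\ell=r_js_js_{j-1}\cdots s_1$, $j\ge1$, such that: (a) for every $i\in[j]$, $s_i$ is the lexicographically smallest proper nonempty suffix of $r_js_js_{j-1}\cdots s_i$; (b) for every $i\in[j-1]$, $s_i$ has even length and $s_i<u$; (c) $s_j$ has odd length or $u\le s_j$. (It is obtained by repeatedly removing the smallest proper suffix of the remaining word, which stays Lyndon, until the removed suffix fails condition (b).) *)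

From mathcomp Require Import all_boot all_order.
Set Implicit Arguments. Unset Strict Implicit. Unset Printing Implicit Defensive.
Import Order.TTheory.


Section Words.
Context {disp : Order.disp_t} {T : orderType disp}.

Fixpoint lexlt (s t : seq T) : bool :=
  match s, t with
  | _, [::] => false
  | [::], _ :: _ => true
  | x :: s', y :: t' => (x < y)%O || ((x == y) && lexlt s' t')
  end.

Definition lexle (s t : seq T) : bool := (s == t) || lexlt s t.

(* a word or the formal symbol infinity: [None] stands for infinity *)
Definition wordinf := option (seq T).

Definition lt_inf (w : seq T) (u : wordinf) : bool :=
  match u with None => true | Some v => lexlt w v end.

Definition le_inf (u : wordinf) (w : seq T) : bool :=
  match u with None => false | Some v => lexle v w end.

Definition lyndon (w : seq T) : Prop :=
  0 < size w /\ forall k, 0 < k < size w -> lexlt w (drop k w).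

Definition smallest_proper_suffix (s w : seq T) : Prop :=
  [/\ 0 < size s < size w, drop (size w - size s) w = s
    & forall k, 0 < k < size w -> lexle s (drop k w)].

(* Iterated standard factorization of l w.r.t. u: l = r_j s_j s_{j-1} ... s_1,
   where ss = [:: s_1; s_2; ...; s_j] (so s_i = nth [::] ss i.-1, j = size ss). *)
Definition isf (l : seq T) (u : wordinf) (r : seq T) (ss : seq (seq T)) : Prop :=
  [/\ 1 <= size ss,
      l = r ++ flatten (rev ss),
      (* (a): s_{k+1} is the smallest proper nonempty suffix of r_j s_j ... s_{k+1} *)
      (forall k, k < size ss ->
         smallest_proper_suffix (nth [::] ss k) (r ++ flatten (rev (drop k ss)))),
      (forall k, k < (size ss).-1 ->
         ~~ odd (size (nth [::] ss k)) && lt_inf (nth [::] ss k) u)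
    &
      odd (size (nth [::] ss (size ss).-1)) || le_inf u (nth [::] ss (size ss).-1)].

End Words.

(* Removing smallest proper suffixes one at a time, each removed suffix is at
   least the one removed before it: if [b] is the smallest proper suffix of [v]
   and [a] that of [v ++ a], then [a <= b ++ a] since [b ++ a] is a proper
   suffix, and [b < a] is impossible, because either [b] diverges from [a]
   (and then [b ++ a < a]), or [a = b ++ c] with [a <= c <= b ++ c = a].
   The two remaining inequalities only use that [s_1] is a proper nonempty
   suffix of the Lyndon word [l] and that [r] is a proper prefix of [l]. *)

From mathcomp Require Import all_boot all_order.
Import Order.TTheory.

Set Implicit Arguments.
Unset Strict Implicit.
Unset Printing Implicit Defensive.

Section Words.
Context {disp : Order.disp_t} {T : orderType disp}.
Implicit Types a b c p s t v w : seq T.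

Lemma lexltxx s : lexlt s s = false.
Proof. by elim: s => //= x s ->; rewrite ltxx eqxx. Qed.

Lemma lexlt_trans s t v : lexlt s t -> lexlt t v -> lexlt s v.
Proof.
elim: s t v => [|x s IH] [|y t] [|z v] //=.
case/orP=> [xy|/andP[/eqP-> st]]; case/orP=> [yz|/andP[/eqP<- tv]].
- by rewrite (lt_trans xy yz).
- by rewrite xy.
- by rewrite yz.
- by rewrite eqxx (IH _ _ st tv) orbT.
Qed.

Lemma lexle_lt_trans s t v : lexle s t -> lexlt t v -> lexlt s v.
Proof. by case/orP=> [/eqP->//|]; apply: lexlt_trans. Qed.

Lemma lexle_anti s t : lexle s t -> lexle t s -> s = t.
Proof.
case/orP=> [/eqP//|st]; case/orP=> [/eqP//|ts].
by have := lexlt_trans st ts; rewrite lexltxx.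
Qed.

Lemma lexlt_total s t : s != t -> lexlt s t || lexlt t s.
Proof.
elim: s t => [|x s IH] [|y t] //=.
by case: (ltgtP x y) => //= <- neq_st; apply: IH; apply: contra neq_st => /eqP->.
Qed.

Lemma lexlt_prefix s t : t != [::] -> lexlt s (s ++ t).
Proof. by elim: s => [|x s IH] /=; [case: t | move=> t0; rewrite eqxx IH ?orbT]. Qed.

Lemma lexlt_cat2l p s t : lexlt (p ++ s) (p ++ t) = lexlt s t.
Proof. by elim: p => //= x p ->; rewrite ltxx eqxx. Qed.

Lemma lexle_cat2l p s t : lexle (p ++ s) (p ++ t) = lexle s t.
Proof. by rewrite /lexle lexlt_cat2l; elim: p => //= x p; rewrite eqseq_cons eqxx. Qed.

Lemma lexlt_prefix_or_diverge b a : lexlt b a ->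
  (exists2 c, c != [::] & a = b ++ c) \/ (forall t, lexlt (b ++ t) a).
Proof.
elim: b a => [|y b IH] [|x a] //=; first by left; exists (x :: a).
case/orP=> [yx|/andP[/eqP-> ba]]; first by right=> t; rewrite yx.
case: (IH _ ba) => [[c c0 ->]|ba_t]; first by left; exists c.
by right=> t; rewrite eqxx ba_t orbT.
Qed.

Lemma size_proper_prefix p s : p != [::] -> s != [::] ->
  0 < size p < size (p ++ s).
Proof. by rewrite -!size_eq0 -!lt0n size_cat => -> s0; rewrite -ltn_psubLR ?subnn. Qed.

Lemma lyndon_lt_suffix p s : lyndon (p ++ s) -> p != [::] -> s != [::] ->
  lexlt (p ++ s) s.
Proof.
case=> _ Ly p0 s0; rewrite -{2}(drop_size_cat s (erefl (size p))).
exact/Ly/size_proper_prefix.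
Qed.

Lemma smallest_proper_suffix_cat s w : smallest_proper_suffix s w ->
  s != [::] /\ exists2 p, p != [::] & w = p ++ s.
Proof.
case=> /andP[s0 sw] ds _; split; first by rewrite -size_eq0 -lt0n.
exists (take (size w - size s) w); last by rewrite -{2}ds cat_take_drop.
by rewrite -size_eq0 size_take ltn_subrL s0 (ltn_trans s0 sw) -lt0n subn_gt0.
Qed.

Lemma smallest_proper_suffix_le a w p c : smallest_proper_suffix a w ->
  w = p ++ c -> p != [::] -> c != [::] -> lexle a c.
Proof.
move=> [_ _ a_min] Ew p0 c0; rewrite Ew in a_min.
rewrite -(drop_size_cat c (erefl (size p))).
exact/a_min/size_proper_prefix.
Qed.

Lemma lexle_smallest_proper_suffix_cat a b v :
  smallest_proper_suffix b v -> smallest_proper_suffix a (v ++ a) -> lexle a b.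
Proof.
move=> /smallest_proper_suffix_cat[b0 [w w0 ->]] sps_a.
have a_le_ba : lexle a (b ++ a).
  by apply: smallest_proper_suffix_le sps_a (esym (catA _ _ _)) w0 _; case: (b) b0.
have [/eqP->|/lexlt_total/orP[ab|ba]] := boolP (a == b).
- by rewrite /lexle eqxx.
- by rewrite /lexle ab orbT.
case: (lexlt_prefix_or_diverge ba) => [[c c0 Ea]|ba_t].
- have a_le_c : lexle a c.
    apply: (smallest_proper_suffix_le (p := (w ++ b) ++ b) sps_a) _ _ c0.
      by rewrite Ea !catA.
    by case: (w) w0.
  move: a_le_ba; rewrite Ea lexle_cat2l -Ea => c_le_a.
  have /(congr1 size) := lexle_anti a_le_c c_le_a.
  by rewrite Ea size_cat -{2}(add0n (size c)) => /addIn/eqP; rewrite size_eq0 (negPf b0).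
- by have := lexle_lt_trans a_le_ba (ba_t a); rewrite lexltxx.
Qed.

Lemma flatten_rev_drop_nth (ss : seq (seq T)) k : k < size ss ->
  flatten (rev (drop k ss)) = flatten (rev (drop k.+1 ss)) ++ nth [::] ss k.
Proof. by move=> lt_k; rewrite (drop_nth [::] lt_k) rev_cons flatten_rcons. Qed.

End Words.

Theorem lemma4p19 (disp : Order.disp_t) (T : orderType disp)
  (l : seq T) (u : @wordinf disp T) (r : seq T) (ss : seq (seq T)) :
  lyndon l -> 2 <= size l -> isf l u r ss ->
  [/\ lexlt r l,
      lexlt l (nth [::] ss 0)
    & forall k, k.+1 < size ss -> lexle (nth [::] ss k) (nth [::] ss k.+1)].
Proof.
move=> Ly _ [ss0 El sps_s _ _].
have sps_ss k : k < size ss -> smallest_proper_suffix (nth [::] ss k)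
    ((r ++ flatten (rev (drop k.+1 ss))) ++ nth [::] ss k).
  by move=> lt_k; rewrite -catA -flatten_rev_drop_nth //; apply: sps_s.
have El1 : l = (r ++ flatten (rev (drop 1 ss))) ++ nth [::] ss 0.
  by rewrite El -catA -flatten_rev_drop_nth // drop0.
have sps_s1 := sps_ss 0 ss0; rewrite -El1 in sps_s1.
have [s1_0 [p p0 Ep]] := smallest_proper_suffix_cat sps_s1.
split.
- rewrite El1 -catA; apply: lexlt_prefix.
  by rewrite -nilpE cat_nilp !nilpE (negPf s1_0) andbF.
- by rewrite Ep; apply: lyndon_lt_suffix => //; rewrite -Ep.
- move=> k lt_k1.
  exact: lexle_smallest_proper_suffix_cat (sps_s _ lt_k1) (sps_ss _ (ltnW lt_k1)).
Qed.
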